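(* For all ProbNetKAT programs $p,q$: $[\![p]\!] = [\![q]\!]$ (as maps $2^{\mathsf{Pk}}\to\mathcal{D}(2^{\mathsf{Pk}})$) if and only if $\mathcal{B}[\![p]\!] = \mathcal{B}[\![q]\!]$.
   Context: Fix finitely many fields $f_1,\dots,f_k$, each ranging over a finite set of natural numbers. A packet $\pi$ is a record assigning a value to each field; $\pi.f$ is the value of field $f$ and $\pi[f:=n]$ is $\pi$ with field $f$ updated to $n$. $\mathsf{Pk}$ is the finite set of all packets. Syntax. Predicates: $t ::= \mathsf{false} \mid \mathsf{true} \mid f=n \mid t \,\&\, u \mid t ; u \mid \neg t$. Programs: $p ::= t \mid f \leftarrow n \mid p \,\&\, q \mid p ; q \mid p \oplus_r q \mid p^*$ (union, sequencing, probabilistic choice with rational $r\in[0,1]$, iteration). $p^{(0)} := \mathsf{true}$, $p^{(n+1)} := \mathsf{true} \,\&\, (p ; p^{(n)})$. Matrix semantics $\mathcal{B}[\![p]\!]\in[0,1]^{2^{\mathsf{Pk}}\times 2^{\mathsf{Pk}}}$ ($[\varphi]$ = Iverson bracket): $\mathcal{B}[\![\mathsf{false}]\!]_{ab}=[b=\emptyset]$; $\mathcal{B}[\![\mathsf{true}]\!]_{ab}=[a=b]$; $\mathcal{B}[\![f=n]\!]_{ab}=[b=\{\pi\in a:\pi.f=n\}]$; $\mathcal{B}[\![\neg t]\!]_{ab}=[b\subseteq a]\,\mathcal{B}[\![t]\!]_{a,a-b}$; $\mathcal{B}[\![f\leftarrow n]\!]_{ab}=[b=\{\pi[f:=n]:\pi\in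 a\}]$; $\mathcal{B}[\![p\,\&\,q]\!]_{ab}=\sum_{c,d}[c\cup d=b]\,\mathcal{B}[\![p]\!]_{ac}\mathcal{B}[\![q]\!]_{ad}$; $\mathcal{B}[\![p;q]\!]=\mathcal{B}[\![p]\!]\mathcal{B}[\![q]\!]$; $\mathcal{B}[\![p\oplus_r q]\!]=r\mathcal{B}[\![p]\!]+(1-r)\mathcal{B}[\![q]\!]$; $\mathcal{B}[\![p^*]\!]_{ab}=\lim_n\mathcal{B}[\![p^{(n)}]\!]_{ab}$. Denotational semantics: $\mathcal{D}(X)$ = probability distributions on finite $X$; $\delta_x$ Dirac; $\mathcal{D}(g)(\mu)=\mu\circ g^{-1}$; $g^\dagger(\mu)(A)=\sum_x g(x)(A)\mu(x)$; $\mu\times\nu$ product. Order: $\mu\sqsubseteq\nu$ iff $\mu(\{b:a\subseteq b\})\le\nu(\{b:a\subseteq b\})$ for all $a$. $[\![\mathsf{false}]\!](a)=\delta_\emptyset$; $[\![\mathsf{true}]\!](a)=\delta_a$; $[\![f=n]\!](a)=\delta_{\{\pi\in a:\pi.f=n\}}$; $[\![f\leftarrow n]\!](a)=\delta_{\{\pi[f:=n]:\pi\in a\}}$; $[\![\neg t]\!](a)=\mathcal{D}(\lambda b.a-b)([\![t]\!](a))$; $[\![p\,\&\,q]\!](a)=\mathcal{D}(\cup)([\![p]\!](a)\times[\![q]\!](a))$; $[\![p;q]\!](a)=[\![q]\!]^\dagger([\![p]\!](a))$; $[\![p\oplus_r q]\!](a)=r[\![p]\!](a)+(1-r)[\![q]\!](a)$;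 $[\![p^*]\!](a)=\bigsqcup_n[\![p^{(n)}]\!](a)$ (supremum of a $\sqsubseteq$-increasing chain). *)

From HB Require Import structures.
From mathcomp Require Import all_boot all_order all_algebra.
From mathcomp Require Import boolp classical_sets filter reals topology normedtype.
Import numFieldNormedType.Exports.
Set Implicit Arguments. Unset Strict Implicit. Unset Printing Implicit Defensive.
Import Order.TTheory GRing.Theory Num.Theory.
Local Open Scope ring_scope.

Section ProbNetKAT.
Variable R : realType.
(* finitely many fields F; field f ranges over the finite set V f *)
Variable F : finType.
Variable V : F -> finType.

Local Notation Pk := {dffun forall f : F, V f}.

Definition upd (pi : Pk) (f : F) (n : V f) : Pk :=
  finfun (fun g : F => match f =P g with
                       | ReflectT e => ecast g (V g) e n
                       | ReflectF _ => pi g end).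
Arguments upd pi f n : clear implicits.

Inductive pred :=
| PFalse | PTrue | PTest (f : F) (n : V f)
| PAnd (t u : pred) | PSeq (t u : pred) | PNeg (t : pred).
Arguments PTest f n : clear implicits.

Definition prob := {r : rat | (0 <= r <= 1)%R}.

Inductive prog :=
| PPred (t : pred)
| PAssign (f : F) (n : V f)
| PUnion (p q : prog)
| PSeqP (p q : prog)
| PChoice (p q : prog) (r : prob)
| PStar (p : prog).
Arguments PAssign f n : clear implicits.

Definition rv (r : prob) : R := ratr (sval r).

Definition mx := {set Pk} -> {set Pk} -> R.

Definition detM (g : {set Pk} -> {set Pk}) : mx := fun a b => (b == g a)%:R.
Definition unionM (M N : mx) : mx := fun a b =>
  \sum_(c : {set Pk}) \sum_(d : {set Pk}) ((c :|: d) == b)%:R * M a c * N a d.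
Definition seqM (M N : mx) : mx := fun a b => \sum_(c : {set Pk}) M a c * N c b.
Definition chM (r : R) (M N : mx) : mx := fun a b => r * M a b + (1 - r) * N a b.
Definition negM (M : mx) : mx := fun a b => (b \subset a)%:R * M a (a :\: b).

Definition testSet (f : F) (n : V f) (a : {set Pk}) : {set Pk} :=
  [set pi in a | pi f == n].
Definition assignSet (f : F) (n : V f) (a : {set Pk}) : {set Pk} :=
  [set upd pi f n | pi in a].
Arguments testSet f n a : clear implicits.
Arguments assignSet f n a : clear implicits.

Fixpoint Bpred (t : pred) : mx :=
  match t with
  | PFalse => detM (fun _ => @finset.set0 _)
  | PTrue => detM id
  | PTest f n => detM (testSet f n)
  | PAnd t u => unionM (Bpred t) (Bpred u)
  | PSeq t u => seqM (Bpred t) (Bpred u)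
  | PNeg t => negM (Bpred t)
  end.

(* B[[p^(n)]] where p^(0) = true, p^(n+1) = true & (p ; p^(n)) *)
Definition Biter (M : mx) (n : nat) : mx :=
  iter n (fun N => unionM (detM id) (seqM M N)) (detM id).

Fixpoint B (p : prog) : mx :=
  match p with
  | PPred t => Bpred t
  | PAssign f n => detM (assignSet f n)
  | PUnion p q => unionM (B p) (B q)
  | PSeqP p q => seqM (B p) (B q)
  | PChoice p q r => chM (rv r) (B p) (B q)
  | PStar p => fun a b => limn (fun n => Biter (B p) n a b)
  end.

(* a distribution on the finite set 2^Pk is given by its mass function *)
Definition dist := {set Pk} -> R.
Definition is_dist (mu : dist) : Prop :=
  (forall b, 0 <= mu b) /\ \sum_(b : {set Pk}) mu b = 1.

Definition dirac (c : {set Pk}) : dist := fun b => (b == c)%:R.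
Definition pushD (g : {set Pk} -> {set Pk}) (mu : dist) : dist :=
  fun b => \sum_(c : {set Pk}) (g c == b)%:R * mu c.
Definition unionD (mu nu : dist) : dist := fun b =>
  \sum_(c : {set Pk}) \sum_(d : {set Pk}) ((c :|: d) == b)%:R * (mu c * nu d).
Definition bindD (k : {set Pk} -> dist) (mu : dist) : dist :=
  fun b => \sum_(c : {set Pk}) k c b * mu c.
Definition mixD (r : R) (mu nu : dist) : dist := fun b => r * mu b + (1 - r) * nu b.

Definition leD (mu nu : dist) : Prop :=
  forall a : {set Pk}, \sum_(b : {set Pk} | a \subset b) mu b <= \sum_(b : {set Pk} | a \subset b) nu b.

Definition is_lubD (c : nat -> dist) (m : dist) : Prop :=
  [/\ is_dist m, (forall n, leD (c n) m) &
      (forall m', is_dist m' -> (forall n, leD (c n) m') -> leD m m')].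

Definition supD (c : nat -> dist) : dist :=
  match pselect (exists m, is_lubD c m) with
  | left H => sval (cid H)
  | right _ => c 0%N
  end.

Definition Diter (K : {set Pk} -> dist) (n : nat) : {set Pk} -> dist :=
  iter n (fun D => fun a => unionD (dirac a) (bindD D (K a))) dirac.

Fixpoint denp (t : pred) : {set Pk} -> dist :=
  match t with
  | PFalse => fun _ => dirac (@finset.set0 _)
  | PTrue => dirac
  | PTest f n => fun a => dirac (testSet f n a)
  | PAnd t u => fun a => unionD (denp t a) (denp u a)
  | PSeq t u => fun a => bindD (denp u) (denp t a)
  | PNeg t => fun a => pushD (fun b => a :\: b) (denp t a)
  end.

Fixpoint den (p : prog) : {set Pk} -> dist :=
  match p with
  | PPred t => denp t
  | PAssign f n => fun a => dirac (assignSet f n a)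
  | PUnion p q => fun a => unionD (den p a) (den q a)
  | PSeqP p q => fun a => bindD (den q) (den p a)
  | PChoice p q r => fun a => mixD (rv r) (den p a) (den q a)
  | PStar p => fun a => supD (fun n => Diter (den p) n a)
  end.

End ProbNetKAT.

From Pilot Require Import Defs.
From mathcomp Require Import all_boot all_order all_algebra.
From mathcomp Require Import boolp classical_sets filter reals topology normedtype sequences.
Import Order.TTheory GRing.Theory Num.Theory.
Import numFieldNormedType.Exports.
Local Open Scope ring_scope.
Set Implicit Arguments. Unset Strict Implicit. Unset Printing Implicit Defensive.

(* The two semantics are one object: B[[p]]_(a,b) = [[p]](a)(b) for every
   program p, the constructors other than the star being matched by
   rearranging finite sums.  For p^* the iterates [[p^(n)]](a) form a
   [=-chain; their up-set masses mu({b | c \subset b}) increase and are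
   bounded by 1, hence converge, and Moebius inversion over the finite
   lattice 2^Pk turns this into pointwise convergence of the point masses.
   The pointwise limit is the [=-supremum of the chain, and it is also the
   limit defining B[[p^*]]. *)

Lemma sum_indicator_cond (R : pzSemiRingType) (T : finType) (P : {pred T})
    (x : T) (f : T -> R) :
  \sum_(y | P y) (x == y)%:R * f y = (P x)%:R * f x.
Proof.
rewrite big_mkcond (bigD1 x) //= eqxx mul1r big1 ?addr0.
  by case: (P x); rewrite ?mul1r ?mul0r.
by move=> y /negbTE; rewrite eq_sym => ->; case: (P y); rewrite ?mul0r.
Qed.

Lemma sum_indicator (R : pzSemiRingType) (T : finType) (x : T) (f : T -> R) :
  \sum_y (x == y)%:R * f y = f x.
Proof. by rewrite (sum_indicator_cond predT) mul1r. Qed.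

Lemma superset_ind (T : finType) (P : {set T} -> Prop) :
  (forall a : {set T}, (forall b : {set T}, a \proper b -> P b) -> P a) ->
  forall a, P a.
Proof.
move=> IH a.
suff K n (b : {set T}) : (#|~: b| < n)%N -> P b by exact: (K _ a (ltnSn _)).
elim: n b => [|n IHn] b //= lt_b; apply: IH => c bc; apply: IHn.
by rewrite -ltnS; apply: leq_trans lt_b; rewrite ltnS proper_card // properC.
Qed.

Section Semantics.
Variable R : realType.
Variable F : finType.
Variable V : F -> finType.
Local Notation Pk := {dffun forall f : F, V f}.
Local Notation S := {set Pk}.
Local Notation dist := (dist R V).
Local Notation dirac := (@dirac R F V).
Local Notation mx := (mx R V).

Definition upmass (mu : dist) (a : S) : R := \sum_(b : S | a \subset b) mu b.

Lemma leDE (mu nu : dist) : leD mu nu <-> forall a, upmass mu a <= upmass nu a.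
Proof. by []. Qed.

Lemma upmass_set0 (mu : dist) : upmass mu finset.set0 = \sum_b mu b.
Proof. by apply: eq_bigl => b; rewrite finset.sub0set. Qed.

Lemma upmass_dirac (c a : S) : upmass (dirac c) a = (a \subset c)%:R.
Proof.
rewrite /upmass /Defs.dirac.
under eq_bigr => b _ do rewrite eq_sym -(mulr1 (_%:R)).
by rewrite (sum_indicator_cond (fun b : S => a \subset b) c (fun=> 1)) mulr1.
Qed.

Lemma upmass_bind (k : S -> dist) (mu : dist) a :
  upmass (bindD k mu) a = \sum_c mu c * upmass (k c) a.
Proof.
rewrite /upmass /bindD exchange_big /=; apply: eq_bigr => c _.
by rewrite mulrC mulr_suml.
Qed.

(* c :|: d contains a exactly when d contains a :\: c. *)
Lemma upmass_union (mu nu : dist) a :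
  upmass (unionD mu nu) a = \sum_c mu c * upmass nu (a :\: c).
Proof.
rewrite /upmass /unionD exchange_big /=; apply: eq_bigr => c _.
rewrite exchange_big /= mulr_sumr [RHS]big_mkcond /=; apply: eq_bigr => d _.
rewrite (sum_indicator_cond (fun b : S => a \subset b) (c :|: d) (fun=> mu c * nu d)).
by rewrite -subDset; case: (_ \subset _); rewrite ?mul1r ?mul0r.
Qed.

Lemma mass_upmassE (mu : dist) a :
  mu a = upmass mu a - \sum_(b : S | a \proper b) mu b.
Proof.
rewrite /upmass (bigD1 a) //= [X in _ - X](eq_bigl (fun b : S => (a \subset b) && (b != a))).
  by rewrite addrK.
by move=> b; rewrite finset.properEneq andbC eq_sym.
Qed.

Lemma upmass_inj (mu nu : dist) : upmass mu =1 upmass nu -> mu = nu.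
Proof.
move=> eq_up; apply: funext => b; elim/superset_ind: b => b IH.
by rewrite mass_upmassE [RHS]mass_upmassE eq_up; congr (_ - _); apply: eq_bigr.
Qed.

Lemma upmass_le1 (mu : dist) a : is_dist mu -> upmass mu a <= 1.
Proof.
case=> mu_ge0 <-; rewrite [X in _ <= X](bigID (fun b : S => a \subset b)) /=.
by rewrite lerDl sumr_ge0.
Qed.

Lemma dirac_dist c : is_dist (dirac c).
Proof.
split=> [b|]; first by rewrite /Defs.dirac ler0n.
by rewrite -upmass_set0 upmass_dirac finset.sub0set.
Qed.

Lemma bind_dist (k : S -> dist) mu :
  is_dist mu -> (forall c, is_dist (k c)) -> is_dist (bindD k mu).
Proof.
move=> [mu_ge0 mu1] k_dist; split=> [b|].
  by apply: sumr_ge0 => c _; rewrite mulr_ge0 //; case: (k_dist c).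
rewrite -upmass_set0 upmass_bind -mu1; apply: eq_bigr => c _.
by rewrite upmass_set0; case: (k_dist c) => _ ->; rewrite mulr1.
Qed.

Lemma union_dist (mu nu : dist) :
  is_dist mu -> is_dist nu -> is_dist (unionD mu nu).
Proof.
move=> [mu_ge0 mu1] [nu_ge0 nu1]; split=> [b|].
  by do 2!(apply: sumr_ge0 => ? _); rewrite !mulr_ge0.
rewrite -upmass_set0 upmass_union -mu1; apply: eq_bigr => c _.
by rewrite finset.set0D upmass_set0 nu1 mulr1.
Qed.

Lemma mix_dist (r : R) (mu nu : dist) :
  0 <= r <= 1 -> is_dist mu -> is_dist nu -> is_dist (mixD r mu nu).
Proof.
move=> /andP[r_ge0 r_le1] [mu_ge0 mu1] [nu_ge0 nu1]; split=> [b|].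
  by rewrite /mixD addr_ge0 // mulr_ge0 // subr_ge0.
by rewrite /mixD big_split /= -!mulr_sumr mu1 nu1 !mulr1 addrC subrK.
Qed.

Lemma push_dist (g : S -> S) (mu : dist) : is_dist mu -> is_dist (pushD g mu).
Proof.
move=> [mu_ge0 mu1]; split=> [b|]; first by apply: sumr_ge0 => c _; rewrite mulr_ge0.
rewrite /pushD exchange_big /= -[RHS]mu1; apply: eq_bigr => c _.
exact: (sum_indicator (g c) (fun=> mu c)).
Qed.

Lemma rv_itv (r : prob) : 0 <= rv R r <= 1.
Proof.
case: r => x x_itv; have /andP[x_ge0 x_le1] := x_itv.
rewrite /rv /= ler0q x_ge0 /=.
by rewrite -(ler_rat R) rmorph1 in x_le1.
Qed.

Lemma leD_bind (k k' : S -> dist) mu : (forall c, 0 <= mu c) ->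
  (forall c, leD (k c) (k' c)) -> leD (bindD k mu) (bindD k' mu).
Proof.
move=> mu_ge0 le_k; apply/leDE => a; rewrite !upmass_bind.
by apply: ler_sum => c _; rewrite ler_wpM2l // le_k.
Qed.

Lemma leD_union (mu nu nu' : dist) : (forall c, 0 <= mu c) ->
  leD nu nu' -> leD (unionD mu nu) (unionD mu nu').
Proof.
move=> mu_ge0 le_nu; apply/leDE => a; rewrite !upmass_union.
by apply: ler_sum => c _; rewrite ler_wpM2l // le_nu.
Qed.

Lemma leD_dirac_union (nu : dist) c : is_dist nu -> leD (dirac c) (unionD (dirac c) nu).
Proof.
move=> [nu_ge0 nu1]; apply/leDE => a; rewrite upmass_dirac upmass_union.
under eq_bigr do rewrite /Defs.dirac eq_sym.
rewrite sum_indicator.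
have [ac|_] := boolP (a \subset c); last by rewrite sumr_ge0.
by move: ac; rewrite -finset.setD_eq0 => /eqP ->; rewrite upmass_set0 nu1.
Qed.

Lemma cvgn_sum (T : finType) (P : {pred T}) (u : T -> nat -> R) :
  (forall i, P i -> cvgn (u i)) ->
  ((fun n => \sum_(i | P i) u i n) @ \oo --> \sum_(i | P i) limn (u i))%classic.
Proof. by move=> u_cvg; apply: cvg_big => //; exact: add_continuous. Qed.

Section Chain.
Variable c : nat -> dist.
Hypothesis chain_dist : forall n, is_dist (c n).
Hypothesis chain_le : forall n, leD (c n) (c n.+1).

Lemma chain_upmass_nondecreasing a : nondecreasing_seq (fun n => upmass (c n) a).
Proof. by apply/nondecreasing_seqP => n; exact: chain_le. Qed.

Lemma chain_upmass_cvg a : cvgn (fun n => upmass (c n) a).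
Proof.
apply: nondecreasing_is_cvgn (chain_upmass_nondecreasing a) _.
by exists 1 => _ [n _ <-]; exact: upmass_le1.
Qed.

Lemma chain_cvg b : cvgn (fun n => c n b).
Proof.
elim/superset_ind: b => b IH.
under eq_fun do rewrite mass_upmassE.
apply: is_cvgB; first exact: chain_upmass_cvg.
by apply/cvg_ex; eexists; apply: cvgn_sum.
Qed.

Definition chain_lim : dist := fun b => limn (fun n => c n b).

Lemma upmass_chain_lim a : upmass chain_lim a = limn (fun n => upmass (c n) a).
Proof. by apply/esym/cvg_lim => //; apply: cvgn_sum => b _; exact: chain_cvg. Qed.

Lemma chain_lim_lub : is_lubD c chain_lim.
Proof.
split.
- split=> [b|].
    by apply: limr_ge; [exact: chain_cvg | apply: nearW => n; case: (chain_dist n)].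
  rewrite -upmass_set0 upmass_chain_lim.
  under eq_fun do rewrite upmass_set0 (proj2 (chain_dist _)).
  exact: lim_cst.
- move=> n; apply/leDE => a; rewrite upmass_chain_lim.
  by apply: (nondecreasing_cvgn_le (chain_upmass_nondecreasing a)); exact: chain_upmass_cvg.
- move=> m _ m_ub; apply/leDE => a; rewrite upmass_chain_lim.
  by apply: limr_le; [exact: chain_upmass_cvg | apply: nearW => n; exact: m_ub].
Qed.

Lemma supD_chain : supD c = chain_lim.
Proof.
have [lim_dist lim_ub lim_least] := chain_lim_lub.
rewrite /supD; case: pselect => [H|[]]; last by exists chain_lim.
case: (cid H) => m /= [m_dist m_ub m_least].
apply: upmass_inj => a; apply/le_anti/andP.
by split; [apply: m_least | apply: lim_least].
Qed.

End Chain.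

Lemma Diter_dist (K : S -> dist) n a :
  (forall c, is_dist (K c)) -> is_dist (Diter K n a).
Proof.
move=> K_dist; elim: n a => [|n IH] a; first exact: dirac_dist.
by apply: union_dist; [exact: dirac_dist | exact: bind_dist].
Qed.

Lemma Diter_le (K : S -> dist) n a :
  (forall c, is_dist (K c)) -> leD (Diter K n a) (Diter K n.+1 a).
Proof.
move=> K_dist; elim: n a => [|n IH] a.
  by apply: leD_dirac_union; apply: bind_dist => //; exact: dirac_dist.
apply: leD_union; first by case: (dirac_dist a).
by apply: leD_bind => //; case: (K_dist a).
Qed.

Lemma unionM_unionD (M N : mx) : unionM M N = fun a => unionD (M a) (N a).
Proof.
apply/funext => a; apply/funext => b.
by apply: eq_bigr => c _; apply: eq_bigr => d _; rewrite mulrA.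
Qed.

Lemma seqM_bindD (M N : mx) : seqM M N = fun a => bindD N (M a).
Proof.
apply/funext => a; apply/funext => b.
by apply: eq_bigr => c _; rewrite mulrC.
Qed.

(* M a lives on the subsets of a, where b |-> a :\: b is an involution. *)
Lemma negM_pushD (M : mx) : (forall a b : S, ~~ (b \subset a) -> M a b = 0) ->
  negM M = fun a => pushD (fun b => a :\: b) (M a).
Proof.
move=> M_supp; apply/funext => a; apply/funext => b; rewrite /negM /pushD.
have [ba|nba] := boolP (b \subset a); last first.
  rewrite mul0r big1 // => c _; case: eqP => [eq_b|]; last by rewrite mul0r.
  by case/negP: nba; rewrite -eq_b finset.subsetDl.
rewrite mul1r (bigD1 (a :\: b)) //= finset.setDDr finset.setDv finset.set0U.
rewrite (finset.setIidPr ba) eqxx mul1r big1 ?addr0 // => c c_neq.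
case: eqP => [eq_b|]; last by rewrite mul0r.
have [ca|nca] := boolP (c \subset a); last by rewrite M_supp ?mulr0.
case/eqP: c_neq.
by rewrite -eq_b finset.setDDr finset.setDv finset.set0U (finset.setIidPr ca).
Qed.

Lemma Diter_Biter (M : mx) n : Diter M n = Biter M n.
Proof.
elim: n => [|n IH] //.
by rewrite /Diter /Biter !iterS -/(Diter M n) -/(Biter M n) IH unionM_unionD seqM_bindD.
Qed.

Lemma denp_supp (t : Defs.pred V) (a b : S) : ~~ (b \subset a) -> denp R t a b = 0.
Proof.
elim: t a b => [|| f n | t IHt u IHu | t IHt u IHu | t IHt] a b /=.
- by rewrite /Defs.dirac; case: eqP => // ->; rewrite finset.sub0set.
- by rewrite /Defs.dirac; case: eqP => // ->; rewrite subxx.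
- rewrite /Defs.dirac; case: eqP => // -> /negP[].
  by apply/fintype.subsetP => x; rewrite inE => /andP[].
- move=> nba; apply: big1 => c _; apply: big1 => d _.
  case: eqP => [eq_b|]; last by rewrite mul0r.
  have [ca|nca] := boolP (c \subset a); last by rewrite IHt // mul0r mulr0.
  have [da|nda] := boolP (d \subset a); last by rewrite IHu // !mulr0.
  by case/negP: nba; rewrite -eq_b finset.subUset ca da.
- move=> nba; apply: big1 => c _.
  have [ca|nca] := boolP (c \subset a); last by rewrite IHt // mulr0.
  by rewrite IHu ?mul0r //; apply: contra nba => bc; exact: fintype.subset_trans bc ca.
- move=> nba; apply: big1 => c _; case: eqP => [eq_b|]; last by rewrite mul0r.
  by case/negP: nba; rewrite -eq_b finset.subsetDl.
Qed.

Lemma denp_dist (t : Defs.pred V) a : is_dist (denp R t a).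
Proof.
elim: t a => [|| f n | t IHt u IHu | t IHt u IHu | t IHt] a /=;
  by [exact: dirac_dist | exact: union_dist | exact: bind_dist | exact: push_dist].
Qed.

Lemma denp_Bpred (t : Defs.pred V) : denp R t = Bpred R t.
Proof.
elim: t => [|| f n | t IHt u IHu | t IHt u IHu | t IHt] //=.
- by rewrite unionM_unionD -IHt -IHu.
- by rewrite seqM_bindD -IHt -IHu.
- by rewrite negM_pushD -IHt //; exact: denp_supp.
Qed.

Lemma supD_Diter (K : S -> dist) a : (forall c, is_dist (K c)) ->
  supD (fun n => Diter K n a) = chain_lim (fun n => Diter K n a).
Proof. by move=> K_dist; apply: supD_chain => n; [exact: Diter_dist | exact: Diter_le]. Qed.

Lemma den_dist (p : prog V) a : is_dist (den R p a).
Proof.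
elim: p a => [t | f n | p IHp q IHq | p IHp q IHq | p IHp q IHq r | p IHp] a /=.
- exact: denp_dist.
- exact: dirac_dist.
- exact: union_dist.
- exact: bind_dist.
- exact/mix_dist/IHq/IHp/rv_itv.
- rewrite supD_Diter //.
  by case: (@chain_lim_lub (fun n => Diter (den R p) n a)) => // n;
    [exact: Diter_dist | exact: Diter_le].
Qed.

Lemma den_B (p : prog V) : den R p = B R p.
Proof.
elim: p => [t | f n | p IHp q IHq | p IHp q IHq | p IHp q IHq r | p IHp] /=.
- exact: denp_Bpred.
- by [].
- by rewrite unionM_unionD -IHp -IHq.
- by rewrite seqM_bindD -IHp -IHq.
- by rewrite -IHp -IHq.
apply/funext => a; apply/funext => b.
by rewrite supD_Diter; [rewrite -IHp; under eq_fun do rewrite Diter_Biter | exact: den_dist].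
Qed.

End Semantics.

Theorem corollary3p2 (R : realType) (F : finType) (V : F -> finType)
    (p q : prog V) :
  den R p = den R q <-> B R p = B R q.
Proof. by rewrite !den_B. Qed.
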